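(* Let $l<u$ be real, $D=[l,u]$, $b>0$, and let $\Delta Q$ be a real number with $0<\Delta Q\le u-l$. For $p\in D$ let $C_p=\int_l^u\frac{1}{2b}e^{-\frac{|x-p|}{b}}\,dx$. Then $$\max_{\substack{q,q'\in D\\ |q'-q|\le \Delta Q}} \frac{C_{q'}}{C_q}\,e^{\frac{|q'-q|}{b}} = \frac{C_{l+\Delta Q}}{C_l}\,e^{\frac{\Delta Q}{b}}.$$
   Context: Equivalently $C_p = 1-\frac{1}{2}\left(e^{-\frac{p-l}{b}}+e^{-\frac{u-p}{b}}\right)$ for $p\in D$. *)

From Stdlib Require Import Reals Lra.
Open Scope R_scope.

Definition lap_density (b p : R) (x : R) : R :=
  / (2 * b) * exp (- (Rabs (x - p)) / b).

Lemma lap_density_continuous (b p : R) : continuity (lap_density b p).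
Proof.
  intro x. unfold lap_density.
  apply continuity_pt_mult.
  - apply continuity_pt_const. intros ? ?; reflexivity.
  - apply (continuity_pt_comp (fun y => - Rabs (y - p) / b) exp).
    + unfold Rdiv. apply continuity_pt_mult.
      * apply continuity_pt_opp.
        apply (continuity_pt_comp (fun y => y - p) Rabs).
        -- apply continuity_pt_minus; [apply derivable_continuous_pt, derivable_pt_id
                                     | apply continuity_pt_const; intros ? ?; reflexivity].
        -- apply Rcontinuity_abs.
      * apply continuity_pt_const. intros ? ?; reflexivity.
    + apply derivable_continuous_pt, derivable_pt_exp.
Qed.

Lemma lap_density_integrable (b p l u : R) : Riemann_integrable (lap_density b p) l u.
Proof.
  destruct (Rle_dec l u) as [H|H].
  - apply continuity_implies_RiemannInt; [exact H|].
    intros; apply lap_density_continuous.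
  - apply RiemannInt_P1. apply continuity_implies_RiemannInt; [lra|].
    intros; apply lap_density_continuous.
Qed.

Definition Cp (l u b p : R) : R := RiemannInt (lap_density_integrable b p l u).

Definition ratio_obj (l u b q q' : R) : R :=
  Cp l u b q' / Cp l u b q * exp (Rabs (q' - q) / b).

(* Writing E = exp(-(u-l)/b) and a = exp((p-l)/b), the closed form of the
   Laplace mass gives C_p = h(a)/a with the concave quadratic
   h(t) = t - 1/2 - E t^2/2.  For q <= q' and c = exp((q'-q)/b) the objective
   becomes h(ac)/h(a), and the whole claim reduces to two facts about h on
   [1, 1/E]: h(ac) h(1) <= h(a) h(c), and h is nondecreasing.  The case
   q' < q follows from the reflection p |-> l + u - p, which preserves C_p. *)

From Stdlib Require Import Reals Lra.
From Coquelicot Require Import Coquelicot.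
Open Scope R_scope.
(* Coquelicot loads ssreflect, which switches bullet checking off. *)
Set Bullet Behavior "Strict Subproofs".

Lemma exp_div_le (b x y : R) : 0 < b -> x <= y -> exp (x / b) <= exp (y / b).
Proof.
  intros hb [hxy | ->]; [left | right; reflexivity].
  apply exp_increasing, Rmult_lt_compat_r; [apply Rinv_0_lt_compat |]; lra.
Qed.

Lemma one_le_exp_div (b x : R) : 0 < b -> 0 <= x -> 1 <= exp (x / b).
Proof.
  intros hb hx. rewrite <- exp_0. replace (exp 0) with (exp (0 / b)) by (f_equal; field; lra).
  now apply exp_div_le.
Qed.

Lemma exp_div_le_1 (b x : R) : 0 < b -> x <= 0 -> exp (x / b) <= 1.
Proof.
  intros hb hx. rewrite <- exp_0. replace (exp 0) with (exp (0 / b)) by (f_equal; field; lra).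
  now apply exp_div_le.
Qed.

Lemma exp_div_lt_1 (b x : R) : 0 < b -> x < 0 -> exp (x / b) < 1.
Proof.
  intros hb hx. rewrite <- exp_0. apply exp_increasing.
  apply Rmult_lt_reg_r with b; [lra |]. field_simplify; lra.
Qed.

Lemma is_RInt_exp_affine (k s p a c : R) : s <> 0 ->
  is_RInt (fun x => k * exp (s * (x - p))) a c
    (k * (exp (s * (c - p)) - exp (s * (a - p))) / s).
Proof.
  intros hs.
  replace (k * (exp (s * (c - p)) - exp (s * (a - p))) / s) with
    (minus (k * exp (s * (c - p)) / s) (k * exp (s * (a - p)) / s))
    by (unfold minus, plus, opp; simpl; field; exact hs).
  apply (is_RInt_derive (fun x => k * exp (s * (x - p)) / s)).
  - intros x _. auto_derive; [exact I |]. unfold Rminus. field. exact hs.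
  - intros x _. apply (ex_derive_continuous (V := R_NormedModule)). auto_derive. exact I.
Qed.

Lemma ex_RInt_lap_density (b p a c : R) : ex_RInt (lap_density b p) a c.
Proof.
  apply (ex_RInt_continuous (V := R_CompleteNormedModule)). intros z _.
  apply continuity_pt_filterlim, lap_density_continuous.
Qed.

Lemma Cp_closed (l u b p : R) : 0 < b -> l <= p <= u ->
  Cp l u b p = 1 - (exp (- (p - l) / b) + exp (- (u - p) / b)) / 2.
Proof.
  intros hb hp. unfold Cp. rewrite <- RInt_Reals.
  rewrite <- (RInt_Chasles _ l p u) by apply ex_RInt_lap_density.
  rewrite (RInt_ext _ (fun x => / (2 * b) * exp (/ b * (x - p))) l p),
          (RInt_ext _ (fun x => / (2 * b) * exp (- / b * (x - p))) p u).
  - assert (hs : / b <> 0) by (apply Rinv_neq_0_compat; lra).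
    rewrite (is_RInt_unique _ _ _ _ (is_RInt_exp_affine (/ (2 * b)) _ p l p hs)),
      (is_RInt_unique _ _ _ _
         (is_RInt_exp_affine (/ (2 * b)) _ p p u (Ropp_neq_0_compat _ hs))).
    unfold plus; simpl.
    replace (/ b * (p - p)) with 0 by ring. replace (- / b * (p - p)) with 0 by ring.
    replace (/ b * (l - p)) with (- (p - l) / b) by (field; lra).
    replace (- / b * (u - p)) with (- (u - p) / b) by (field; lra).
    rewrite exp_0. field. lra.
  - intros x hx. rewrite Rmin_left, Rmax_right in hx by lra.
    unfold lap_density. rewrite Rabs_right by lra. do 2 f_equal. field. lra.
  - intros x hx. rewrite Rmin_left, Rmax_right in hx by lra.
    unfold lap_density. rewrite Rabs_left by lra. do 2 f_equal. field. lra.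
Qed.

Lemma Cp_reflect (l u b p : R) : 0 < b -> l <= p <= u ->
  Cp l u b (l + u - p) = Cp l u b p.
Proof.
  intros hb hp. rewrite !Cp_closed by lra.
  replace (l + u - p - l) with (u - p) by ring.
  replace (u - (l + u - p)) with (p - l) by ring.
  lra.
Qed.

Definition lap_profile (E t : R) : R := t - / 2 - E * t * t / 2.

Section Profile.

Variable E : R.
Hypothesis E_ge0 : 0 <= E.

Lemma lap_profile_le (s t : R) : 1 <= s <= t -> E * t <= 1 ->
  lap_profile E s <= lap_profile E t.
Proof.
  intros hst hEt.
  assert (diff : lap_profile E t - lap_profile E s = (t - s) * (1 - E * (s + t) / 2))
    by (unfold lap_profile; field).
  assert (0 <= (t - s) * (1 - E * (s + t) / 2)) by (apply Rmult_le_pos; nra).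
  lra.
Qed.

Lemma lap_profile_pos (t : R) : E < 1 -> 1 <= t -> E * t <= 1 -> 0 < lap_profile E t.
Proof.
  intros hE1 ht hEt.
  apply Rlt_le_trans with (lap_profile E 1); [unfold lap_profile; lra |].
  apply lap_profile_le; lra.
Qed.

Lemma lap_profile_mul_le (a c : R) : 1 <= a -> 1 <= c -> E * a * c <= 1 ->
  lap_profile E (a * c) * lap_profile E 1 <= lap_profile E a * lap_profile E c.
Proof.
  intros ha hc hEac.
  assert (gap : lap_profile E a * lap_profile E c - lap_profile E (a * c) * lap_profile E 1
                = (a - 1) * (c - 1) / 4 * (2 - E * (c + 1) + E * a * (c - 1)))
    by (unfold lap_profile; field).
  assert (0 <= (a - 1) * (c - 1)) by (apply Rmult_le_pos; lra).
  assert (0 <= E * a * (c - 1)) by (apply Rmult_le_pos; nra).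
  assert (0 <= 2 - E * (c + 1) + E * a * (c - 1)) by nra.
  assert (0 <= (a - 1) * (c - 1) / 4 * (2 - E * (c + 1) + E * a * (c - 1))) by
    (apply Rmult_le_pos; lra).
  lra.
Qed.

Lemma lap_profile_ratio_le (a c D : R) : E < 1 -> 1 <= a -> 1 <= c <= D ->
  E * a * c <= 1 -> E * D <= 1 ->
  lap_profile E (a * c) / lap_profile E a <= lap_profile E D / lap_profile E 1.
Proof.
  intros hE1 ha hcD hEac hED.
  assert (ha_pos : 0 < lap_profile E a) by (apply lap_profile_pos; nra).
  assert (h1_pos : 0 < lap_profile E 1) by (apply lap_profile_pos; lra).
  assert (hcD_le : lap_profile E c <= lap_profile E D) by (apply lap_profile_le; lra).
  pose proof (lap_profile_mul_le a c ha (proj1 hcD) hEac) as hmul.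
  apply (Rmult_le_reg_r (lap_profile E a * lap_profile E 1)); [nra |].
  replace (lap_profile E (a * c) / lap_profile E a * (lap_profile E a * lap_profile E 1))
    with (lap_profile E (a * c) * lap_profile E 1) by (field; lra).
  replace (lap_profile E D / lap_profile E 1 * (lap_profile E a * lap_profile E 1))
    with (lap_profile E a * lap_profile E D) by (field; lra).
  nra.
Qed.

End Profile.

Lemma Cp_profile (l u b p : R) : 0 < b -> l <= p <= u ->
  Cp l u b p = lap_profile (exp (- (u - l) / b)) (exp ((p - l) / b)) / exp ((p - l) / b).
Proof.
  intros hb hp. rewrite Cp_closed by lra.
  replace (- (p - l) / b) with (- ((p - l) / b)) by (field; lra).
  replace (- (u - p) / b) with (- (u - l) / b + (p - l) / b) by (field; lra).
  rewrite exp_Ropp, exp_plus. unfold lap_profile.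
  field. apply Rgt_not_eq, exp_pos.
Qed.

Lemma ratio_obj_profile (l u b q q' : R) : l < u -> 0 < b ->
  l <= q -> q <= q' -> q' <= u ->
  ratio_obj l u b q q' =
  lap_profile (exp (- (u - l) / b)) (exp ((q - l) / b) * exp ((q' - q) / b))
  / lap_profile (exp (- (u - l) / b)) (exp ((q - l) / b)).
Proof.
  intros hlu hb hq hqq' hq'.
  unfold ratio_obj. rewrite !Cp_profile by lra. rewrite Rabs_right by lra.
  replace ((q' - l) / b) with ((q - l) / b + (q' - q) / b) by (field; lra).
  rewrite exp_plus.
  assert (0 < lap_profile (exp (- (u - l) / b)) (exp ((q - l) / b))).
  { apply lap_profile_pos; [left; apply exp_pos | apply exp_div_lt_1 |
      apply one_le_exp_div |]; try lra.
    rewrite <- exp_plus. replace (- (u - l) / b + (q - l) / b) with ((q - u) / b)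
      by (field; lra).
    apply exp_div_le_1; lra. }
  pose proof (exp_pos ((q - l) / b)). pose proof (exp_pos ((q' - q) / b)).
  field. repeat split; lra.
Qed.

Lemma ratio_obj_le_ordered (l u b dQ q q' : R) : l < u -> 0 < b -> dQ <= u - l ->
  l <= q -> q <= q' -> q' <= u -> q' - q <= dQ ->
  ratio_obj l u b q q' <= ratio_obj l u b l (l + dQ).
Proof.
  intros hlu hb hdQ hq hqq' hq' hgap.
  rewrite !ratio_obj_profile by lra.
  replace ((l - l) / b) with 0 by (field; lra). replace (l + dQ - l) with dQ by ring.
  rewrite exp_0, Rmult_1_l.
  apply lap_profile_ratio_le.
  - left; apply exp_pos.
  - apply exp_div_lt_1; lra.
  - apply one_le_exp_div; lra.
  - split; [apply one_le_exp_div | apply exp_div_le]; lra.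
  - rewrite <- !exp_plus.
    replace (- (u - l) / b + (q - l) / b + (q' - q) / b) with ((q' - u) / b) by (field; lra).
    apply exp_div_le_1; lra.
  - rewrite <- exp_plus.
    replace (- (u - l) / b + dQ / b) with ((dQ - (u - l)) / b) by (field; lra).
    apply exp_div_le_1; lra.
Qed.

Theorem lemma3p2 (l u b dQ : R) (hlu : l < u) (hb : 0 < b)
    (hdQ0 : 0 < dQ) (hdQ1 : dQ <= u - l) :
  (exists q q', l <= q <= u /\ l <= q' <= u /\ Rabs (q' - q) <= dQ /\
     ratio_obj l u b q q' = Cp l u b (l + dQ) / Cp l u b l * exp (dQ / b)) /\
  (forall q q', l <= q <= u -> l <= q' <= u -> Rabs (q' - q) <= dQ ->
     ratio_obj l u b q q' <= Cp l u b (l + dQ) / Cp l u b l * exp (dQ / b)).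
Proof.
  assert (attained : ratio_obj l u b l (l + dQ)
                     = Cp l u b (l + dQ) / Cp l u b l * exp (dQ / b)).
  { unfold ratio_obj. replace (l + dQ - l) with dQ by ring.
    rewrite Rabs_right by lra. reflexivity. }
  split.
  - exists l, (l + dQ). replace (l + dQ - l) with dQ by ring.
    rewrite Rabs_right by lra. repeat split; lra.
  - intros q q' hq hq' hgap. rewrite <- attained.
    destruct (Rle_or_lt q q') as [hle | hlt].
    + rewrite Rabs_right in hgap by lra. apply ratio_obj_le_ordered; lra.
    + rewrite Rabs_left in hgap by lra.
      replace (ratio_obj l u b q q') with (ratio_obj l u b (l + u - q) (l + u - q')).
      * apply ratio_obj_le_ordered; lra.
      * unfold ratio_obj. rewrite !Cp_reflect by lra.
        replace (l + u - q' - (l + u - q)) with (- (q' - q)) by ring.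
        now rewrite Rabs_Ropp.
Qed.
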